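(* Let $\Gamma$ be a Neumaier graph with vertex set $V$ and parameters $(n,k,\lambda;a,c)$. Let $C\subset V$ be a regular clique with nexus $a$, let $e\in C$ be an arbitrary vertex, and let $S$ be the set of neighbours of $e$ in $\Gamma$. Then: (i) The induced subgraph on $S\setminus C$ is regular. Moreover, if the number of neighbours in $S\setminus C$ of a vertex $x\in V\setminus(S\cup\{e\})$ is independent of the choice of $x$, then $\{\{e\},\,C\setminus\{e\},\,S\setminus C,\,V\setminus(S\cup\{e\})\}$ is an equitable partition of $\Gamma$. (ii) If $\Gamma$ is strongly regular, then the number of neighbours in $S\setminus C$ of a vertex $x\in V\setminus(S\cup\{e\})$ is independent of the choice of $x$. (iii) If $\Gamma$ is vertex-transitive, then $\Gamma$ has diameter $2$. Moreover, in this case $\Gamma$ is strongly regular if and only if the number of neighbours in $S\setminus C$ of a vertex $x\in V\setminus(S\cup\{e\})$ is independent of the choice of $x$.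
   Context: All graphs are finite, simple, undirected and connected. A graph is edge-regular with parameters $(n,k,\lambda)$ if it has $n$ vertices, is $k$-regular, and any two adjacent vertices have exactly $\lambda$ common neighbours. A clique $C$ is a regular clique with nexus $a$ if every vertex not in $C$ has exactly $a$ neighbours in $C$. A Neumaier graph is a non-complete edge-regular graph containing a regular clique; in a Neumaier graph all regular cliques have the same size $c$ and nexus $a$, and the graph has parameters $(n,k,\lambda;a,c)$ if it is edge-regular with parameters $(n,k,\lambda)$ and contains a regular clique of size $c$ with nexus $a$. A strongly regular graph with parameters $(n,k,\lambda,\mu)$ is a non-complete connected $k$-regular graph on $n$ vertices in which two adjacent vertices have exactly $\lambda$ common neighbours and two non-adjacent vertices have exactly $\mu$ common neighbours. A partition $\{V_1,\dots,V_m\}$ of the vertex set is equitable if for all $i,j$ the number of neighbours in $V_j$ of a vertex $x\in V_i$ depends only on $i,j$. *)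

From mathcomp Require Import all_boot fingroup perm.
Set Implicit Arguments. Unset Strict Implicit. Unset Printing Implicit Defensive.

Section Graphs.
Variables (T : finType) (g : rel T).

Definition simple_connected_graph : Prop :=
  symmetric g /\ irreflexive g /\ forall x y : T, connect g x y.

Definition nbhd (x : T) : {set T} := [set y | g x y].

Definition k_regular (k : nat) : Prop := forall x : T, #|nbhd x| = k.

Definition complete_graph : Prop := forall x y : T, x != y -> g x y.

Definition edge_regular (n k l : nat) : Prop :=
  #|T| = n /\ k_regular k /\
  forall x y : T, g x y -> #|nbhd x :&: nbhd y| = l.

Definition is_clique (C : {set T}) : Prop :=
  forall x y, x \in C -> y \in C -> x != y -> g x y.

Definition regular_clique (C : {set T}) (a : nat) : Prop :=
  C != set0 /\ is_clique C /\
  forall x, x \notin C -> #|nbhd x :&: C| = a.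

Definition neumaier_params (n k l a c : nat) : Prop :=
  simple_connected_graph /\ edge_regular n k l /\ ~ complete_graph /\
  exists C : {set T}, regular_clique C a /\ #|C| = c.

Definition strongly_regular (n k l mu : nat) : Prop :=
  simple_connected_graph /\ ~ complete_graph /\ #|T| = n /\ k_regular k /\
  (forall x y, g x y -> #|nbhd x :&: nbhd y| = l) /\
  (forall x y, x != y -> ~~ g x y -> #|nbhd x :&: nbhd y| = mu).

Definition is_strongly_regular : Prop :=
  exists n k l mu, strongly_regular n k l mu.

Definition induced_regular (A : {set T}) : Prop :=
  exists r, forall x, x \in A -> #|nbhd x :&: A| = r.

(* P is a partition of the vertex set (every vertex in exactly one block;
   empty blocks are tolerated) which is equitable *)
Definition equitable_partition (P : seq {set T}) : Prop :=
  (forall x : T, count (fun A : {set T} => x \in A) P = 1) /\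
  forall A B, A \in P -> B \in P -> forall x y, x \in A -> y \in A ->
    #|nbhd x :&: B| = #|nbhd y :&: B|.

Definition automorphism (f : {perm T}) : Prop :=
  forall u v, g (f u) (f v) = g u v.

Definition vertex_transitive : Prop :=
  forall x y : T, exists f : {perm T}, automorphism f /\ f x = y.

(* diameter exactly 2 (for a connected graph): some pair at distance 2,
   every pair at distance at most 2 *)
Definition diameter2 : Prop :=
  (exists x y : T, x != y /\ ~~ g x y) /\
  forall x y : T, x != y -> ~~ g x y -> exists z, g x z && g z y.

End Graphs.

From mathcomp Require Import all_boot fingroup perm.

(* A vertex x is described, relative to e and C, by its profile: whether x ~ e,
   and its numbers of neighbours in C \ {e} and in S \ C.  The profile
   determines the number of neighbours in every block of the partition (for R
   through k-regularity).  Clique and nexus conditions fix the first two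
   entries on each block, and the lambda common neighbours of x and e fix the
   third on C \ {e} and S \ C.  A vertex of R has exactly a neighbours in
   C \ {e}, so when the graph is strongly regular its count in S \ C is
   mu - a.  Under vertex-transitivity every non-adjacent pair is moved to some
   (e, x) with x in R; as a > 0 (nexus 0 would make C a connected component),
   x has a neighbour in C \ {e}, which gives diameter 2 and, conversely, makes
   mu = m + a constant. *)

Set Implicit Arguments.
Unset Strict Implicit.
Unset Printing Implicit Defensive.

Section GraphFacts.
Variables (T : finType) (g : rel T).

Lemma automorphism_card_common_nbhd (f : {perm T}) x y :
  automorphism g f ->
  #|nbhd g (f x) :&: nbhd g (f y)| = #|nbhd g x :&: nbhd g y|.
Proof.
move=> autf; rewrite -(card_preimset _ (@perm_inj _ f)); apply: eq_card => z.
by rewrite !inE !autf.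
Qed.

Lemma not_complete_nonadj_pair :
  ~ complete_graph g -> exists x y : T, x != y /\ ~~ g x y.
Proof.
move=> ncomp; case: (pickP [pred p : T * T | (p.1 != p.2) && ~~ g p.1 p.2]).
  by move=> [x y] /andP[xy nxy]; exists x, y.
move=> none; case: ncomp => x y xy.
by have /= := none (x, y); rewrite xy => /negbFE.
Qed.

Lemma vertex_transitive_move_nonadj e x y :
  vertex_transitive g -> x != y -> ~~ g x y ->
  exists2 f : {perm T}, automorphism g f &
    [/\ f x = e, f y != e & ~~ g e (f y)].
Proof.
move=> vt xy nxy; have [f [autf fx]] := vt x e.
exists f => //; rewrite -fx autf (inj_eq (@perm_inj _ f)) eq_sym.
by split.
Qed.

End GraphFacts.

Section NeumaierClique.
Variables (T : finType) (g : rel T).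
Hypotheses (gsym : symmetric g) (girr : irreflexive g).
Variables (C : {set T}) (a : nat) (e : T).
Hypotheses (Cclique : is_clique g C)
  (Cnexus : forall x, x \notin C -> #|nbhd g x :&: C| = a) (eC : e \in C).

Local Notation N := (nbhd g).
Local Notation S := (nbhd g e).
Local Notation R := (~: (nbhd g e :|: [set e])).

Definition clique_partition : seq {set T} := [:: [set e]; C :\ e; S :\: C; R].

Definition profile (x : T) : bool * nat * nat :=
  (g x e, #|N x :&: (C :\ e)|, #|N x :&: (S :\: C)|).

Lemma clique_adj x y : x \in C -> y \in C -> g x y = (x != y).
Proof.
move=> xC yC; have [<-|xy] := eqVneq x y; first exact: girr.
exact: Cclique.
Qed.

Lemma nbhd_clique x : x \in C -> N x :&: C = C :\ x.
Proof.
move=> xC; apply/setP => y; rewrite !inE.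
by case yC: (y \in C); rewrite ?andbF // clique_adj // eq_sym andbT.
Qed.

Lemma in_R x : (x \in R) = (x != e) && ~~ g e x.
Proof. by rewrite !inE negb_or andbC. Qed.

Lemma R_notin_clique x : x \in R -> x \notin C.
Proof.
rewrite in_R => /andP[xe nex]; apply: contra nex => xC.
by rewrite clique_adj // eq_sym.
Qed.

Lemma card_nbhd_S x :
  #|N x :&: S| = #|N x :&: (S :\: C)| + #|N x :&: (C :\ e)|.
Proof.
by rewrite -(cardsID C) addnC setDE -setIA -setDE -setIA (nbhd_clique eC).
Qed.

Lemma card_nbhd_set1 x : #|N x :&: [set e]| = g x e.
Proof.
by rewrite (cardsD1 e) !inE eqxx andbT setDIl setDv setI0 cards0 addn0.
Qed.

Lemma card_nbhd_S_e x : #|N x :&: (S :|: [set e])| = #|N x :&: S| + g x e.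
Proof.
rewrite setIUr cardsU card_nbhd_set1 -[RHS]subn0; congr (_ - _).
apply/eqP; rewrite cards_eq0; apply/eqP/setP => z; rewrite !inE.
by case: eqP => [->|]; rewrite ?girr ?andbF.
Qed.

Lemma card_nbhd_R x : #|N x :&: R| = #|N x| - (#|N x :&: S| + g x e).
Proof. by rewrite -setDE cardsD card_nbhd_S_e. Qed.

Lemma card_nbhd_clique_out x : x \notin C -> #|N x :&: (C :\ e)| = a - g x e.
Proof.
move=> xC; rewrite -(Cnexus xC) [in RHS](cardsD1 e) !inE eC andbT addKn.
by rewrite setIDA.
Qed.

Lemma card_nbhd_clique_in x : x \in C :\ e -> #|N x :&: (C :\ e)| = #|C| - 2.
Proof.
rewrite !inE => /andP[xe xC].
rewrite setIDA nbhd_clique // (cardsD1 x C) (cardsD1 e (C :\ x)) xC.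
by rewrite !inE eq_sym xe eC add1n add1n subn2.
Qed.

Lemma profile_card_blocks k x y : k_regular g k -> profile x = profile y ->
  forall B, B \in clique_partition -> #|N x :&: B| = #|N y :&: B|.
Proof.
move=> kreg [gxe cntC cntSC] B; rewrite !inE => /or4P[] /eqP->.
- by rewrite !card_nbhd_set1 gxe.
- exact: cntC.
- exact: cntSC.
- by rewrite !card_nbhd_R !kreg !card_nbhd_S gxe cntC cntSC.
Qed.

Section EdgeRegular.
Variable l : nat.
Hypothesis lreg : forall x y, g x y -> #|N x :&: N y| = l.

Lemma card_nbhd_S_minus_C_adj x :
  g e x -> #|N x :&: (S :\: C)| = l - #|N x :&: (C :\ e)|.
Proof. by move=> ex; rewrite -(@lreg x e) 1?gsym // card_nbhd_S addnK. Qed.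

Lemma induced_regular_S_minus_C : induced_regular g (S :\: C).
Proof.
exists (l - (a - 1)) => x; rewrite !inE => /andP[xC ex].
by rewrite card_nbhd_S_minus_C_adj // card_nbhd_clique_out // gsym ex.
Qed.

Lemma profile_clique x :
  x \in C :\ e -> profile x = (true, #|C| - 2, l - (#|C| - 2)).
Proof.
move=> xCe; have ex : g e x.
  by move: xCe; rewrite !inE => /andP[xe xC]; rewrite clique_adj // eq_sym.
by rewrite /profile gsym ex card_nbhd_S_minus_C_adj // card_nbhd_clique_in.
Qed.

Lemma profile_S_minus_C x :
  x \in S :\: C -> profile x = (true, a - 1, l - (a - 1)).
Proof.
rewrite !inE => /andP[xC ex].
by rewrite /profile card_nbhd_S_minus_C_adj // card_nbhd_clique_out // gsym ex.
Qed.

End EdgeRegular.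

Lemma card_nbhd_clique_R x : x \in R -> #|N x :&: (C :\ e)| = a.
Proof.
move=> xR; have := xR; rewrite in_R => /andP[_ /negbTE nex].
by rewrite card_nbhd_clique_out ?R_notin_clique // gsym nex subn0.
Qed.

Lemma profile_R x : x \in R -> profile x = (false, a, #|N x :&: (S :\: C)|).
Proof.
move=> xR; rewrite /profile card_nbhd_clique_R //.
by move: xR; rewrite in_R gsym => /andP[_ /negbTE->].
Qed.

Lemma clique_partition_cover x :
  count (fun A : {set T} => x \in A) clique_partition = 1.
Proof.
rewrite /= !inE; have [->|xe] := eqVneq x e; first by rewrite eC orbT.
case xC: (x \in C) => /=; first by rewrite clique_adj // eq_sym xe.
by case: (g e x).
Qed.

Lemma equitable_clique_partition k l :
  k_regular g k -> (forall x y, g x y -> #|N x :&: N y| = l) ->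
  (exists m, forall x, x \in R -> #|N x :&: (S :\: C)| = m) ->
  equitable_partition g clique_partition.
Proof.
move=> kreg lreg [m Rm]; split; first exact: clique_partition_cover.
move=> A B + BP x y => /[!inE] /or4P[] /eqP-> xA yA;
  apply: (profile_card_blocks kreg) BP.
- by move: xA yA; rewrite !inE => /eqP-> /eqP->.
- by rewrite !(profile_clique lreg).
- by rewrite !(profile_S_minus_C lreg).
- by rewrite !profile_R // !Rm.
Qed.

Lemma card_nbhd_S_R x : x \in R -> #|N x :&: S| = #|N x :&: (S :\: C)| + a.
Proof. by move=> xR; rewrite card_nbhd_S card_nbhd_clique_R. Qed.

Lemma strongly_regular_R_count :
  is_strongly_regular g ->
  exists m, forall x, x \in R -> #|N x :&: (S :\: C)| = m.
Proof.
move=> [_ [_ [_ [mu [_ [_ [_ [_ [_ mureg]]]]]]]]].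
exists (mu - a) => x xR; have := xR; rewrite in_R => /andP[xe nex].
by rewrite -(mureg x e) 1?gsym // card_nbhd_S_R // addnK.
Qed.

Lemma nexus_gt0 : (forall x y, connect g x y) -> ~ complete_graph g -> 0 < a.
Proof.
move=> gconn ncomp; rewrite lt0n; apply/negP => /eqP a0; apply: ncomp.
have Cnbhd u v : g u v -> u \in C -> v \in C.
  move=> uv uC; apply/negPn/negP => vC; move: (Cnexus vC); rewrite a0.
  by move/eqP; rewrite cards_eq0 => /eqP/setP/(_ u); rewrite !inE gsym uv uC.
have Cclosed : closed g C.
  by move=> u v uv; apply/idP/idP; apply: Cnbhd; rewrite // gsym.
have allC z : z \in C by rewrite -(closed_connect Cclosed (gconn e z)).
by move=> x y; apply: Cclique.
Qed.

Lemma R_common_nbr x : 0 < a -> x \in R -> exists z, g e z && g z x.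
Proof.
move=> apos xR; have xC := R_notin_clique xR.
move: apos; rewrite -(Cnexus xC) card_gt0 => /set0Pn[z].
rewrite !inE => /andP[xz zC].
move: xR; rewrite in_R => /andP[_ nex].
have ze : z != e by apply: contraNneq nex => <-; rewrite gsym.
by exists z; rewrite clique_adj // eq_sym ze gsym.
Qed.

Section VertexTransitive.
Hypothesis vt : vertex_transitive g.

Lemma vertex_transitive_diameter2 :
  (forall x y, connect g x y) -> ~ complete_graph g -> diameter2 g.
Proof.
move=> gconn ncomp; split; first exact: not_complete_nonadj_pair.
move=> x y xy nxy.
have [f autf [fx fye nefy]] := vertex_transitive_move_nonadj e vt xy nxy.
have [|z /andP[ez zfy]] := @R_common_nbr (f y) (nexus_gt0 gconn ncomp).
  by rewrite in_R fye.
by exists ((f^-1)%g z); rewrite -[g x _]autf -[g _ y]autf fx permKV ez.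
Qed.

Lemma vertex_transitive_common_nbhd m :
  (forall x, x \in R -> #|N x :&: (S :\: C)| = m) ->
  forall x y, x != y -> ~~ g x y -> #|N x :&: N y| = m + a.
Proof.
move=> Rm x y xy nxy.
have [f autf [fx fye nefy]] := vertex_transitive_move_nonadj e vt xy nxy.
have fyR : f y \in R by rewrite in_R fye.
by rewrite -(automorphism_card_common_nbhd _ _ autf) fx setIC card_nbhd_S_R // Rm.
Qed.

End VertexTransitive.

End NeumaierClique.

Theorem theorem3p3 (T : finType) (g : rel T) (n k l a c : nat)
  (C : {set T}) (e : T) :
  neumaier_params g n k l a c ->
  regular_clique g C a ->
  e \in C ->
  let S := nbhd g e in
  let R := ~: (S :|: [set e]) in
  let constcount := exists m, forall x, x \in R -> #|nbhd g x :&: (S :\: C)| = m in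
  (* (i) *)
  (induced_regular g (S :\: C) /\
   (constcount ->
      equitable_partition g [:: [set e]; C :\ e; S :\: C; R])) /\
  (* (ii) *)
  (is_strongly_regular g -> constcount) /\
  (* (iii) *)
  (vertex_transitive g ->
     diameter2 g /\ (is_strongly_regular g <-> constcount)).
Proof.
move=> [[gsym [girr gconn]] [[cardT [kreg lreg]] [ncomp _]]] [_ [Cclique Cnexus]] eC.
move=> S R constcount.
have srg_count := strongly_regular_R_count gsym girr Cclique Cnexus eC.
split; first split.
- exact: (induced_regular_S_minus_C gsym girr Cclique Cnexus eC lreg).
- exact: (equitable_clique_partition gsym girr Cclique Cnexus eC kreg lreg).
split=> // vt; split.
  exact: (vertex_transitive_diameter2 gsym girr Cclique Cnexus eC vt gconn ncomp).
split=> // -[m Rm]; exists n, k, l, (m + a).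
do !split=> //.
exact: (vertex_transitive_common_nbhd gsym girr Cclique Cnexus eC vt Rm).
Qed.
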